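(* Let $\mathcal{P}\subset\mathbb{R}^d$ be finite, $r>0$, and let $\eta$ be a singular $k$-cycle in $\mathcal{U}(\mathcal{P},r)$ with filling radius $R_{fill}(\eta)=R$. Then $\eta_{death}\le R+r$.
   Context: $\mathcal{U}(\mathcal{P},r)=\bigcup_{p\in\mathcal{P}}B_r(p)$ (closed Euclidean balls); for a set $X$ (e.g. the image of a chain), $\mathcal{U}(X,\rho)$ denotes its closed $\rho$-neighborhood. Homology has coefficients in $\mathbb{Z}/2\mathbb{Z}$. A filling of a compactly supported singular $k$-cycle $\eta$ is a singular $(k+1)$-chain $\Gamma$ in $\mathbb{R}^d$ with $\partial\Gamma=\eta$; the filling radius is $R_{fill}(\eta)=\inf\{\rho>0:\exists\,\Gamma\text{ with }\partial\Gamma=\eta\text{ and }\Gamma\subset\mathcal{U}(\eta,\rho)\}$ (chains identified with the union of images of their simplices). The death time $\eta_{death}$ is, in the filtration $\{\mathcal{U}(\mathcal{P},s)\}_{s\ge0}$, the smallest $s\ge r$ at which the class of (the image of) $\eta$ becomes trivial in $H_k(\mathcal{U}(\mathcal{P},s))$. *)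

From Stdlib Require List.
From HB Require Import structures.
From mathcomp Require Import all_boot all_order all_algebra.
From mathcomp Require Import all_classical all_reals all_analysis.
Set Implicit Arguments. Unset Strict Implicit. Unset Printing Implicit Defensive.
Import Order.TTheory GRing.Theory Num.Theory.
Import numFieldNormedType.Exports.
Local Open Scope ring_scope.
Local Open Scope classical_set_scope.

Section Singular.
Variables (R : realType) (d : nat).

Definition enorm (x : 'rV[R]_d) : R := Num.sqrt (\sum_(i < d) x ord0 i ^+ 2).

Definition cball (p : 'rV[R]_d) (r : R) : set 'rV[R]_d :=
  [set x | enorm (x - p) <= r].

Definition Ucov (P : seq 'rV[R]_d) (r : R) : set 'rV[R]_d :=
  \bigcup_(p in [set` P]) cball p r.

Definition cnbhd (X : set 'rV[R]_d) (rho : R) : set 'rV[R]_d :=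
  [set x | exists2 y, X y & enorm (x - y) <= rho].

Definition stdsimplex (n : nat) (t : 'rV[R]_n.+1) : bool :=
  [forall i, 0 <= t ord0 i] && (\sum_i t ord0 i == 1).

(* singular n-simplex: a map Delta^n -> R^d, normalized to be 0 off Delta^n *)
Definition sing_simplex (n : nat) := 'rV[R]_n.+1 -> 'rV[R]_d.

Definition is_sing_simplex n (s : sing_simplex n) : Prop :=
  {within [set t | stdsimplex t], continuous s} /\
  (forall t, ~~ stdsimplex t -> s t = 0).

(* Z/2 chains as formal sums (lists); coefficient = parity of multiplicity *)
Definition chain (n : nat) := seq (sing_simplex n).

Definition is_chain n (c : chain n) : Prop :=
  forall s, List.In s c -> is_sing_simplex s.

Definition coef n (c : chain n) (s : sing_simplex n) : bool :=
  odd (count (fun t => `[< t = s >]) c).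

Definition chain_eq n (c1 c2 : chain n) : Prop :=
  forall s, coef c1 s = coef c2 s.

Definition coface n (i : 'I_n.+2) (t : 'rV[R]_n.+1) : 'rV[R]_n.+2 :=
  \row_j (if unlift i j is Some j' then t ord0 j' else 0).

Definition face n (s : sing_simplex n.+1) (i : 'I_n.+2) : sing_simplex n :=
  fun t => if stdsimplex t then s (coface i t) else 0.

Definition boundary n (c : chain n.+1) : chain n :=
  flatten [seq [seq face s i | i <- enum 'I_n.+2] | s <- c].

Definition is_cycle (n : nat) : chain n -> Prop :=
  match n as m return chain m -> Prop with
  | 0 => fun _ => True
  | m.+1 => fun c => chain_eq (boundary c) [::]
  end.

Definition chain_image n (c : chain n) : set 'rV[R]_d :=
  [set x | exists s, coef c s /\ exists2 t, stdsimplex t & x = s t].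

Definition is_filling n (eta : chain n) (G : chain n.+1) : Prop :=
  is_chain G /\ chain_eq (boundary G) eta.

Definition filling_radius n (eta : chain n) : \bar R :=
  ereal_inf [set rho%:E | rho in
    [set rho : R | 0 < rho /\
       exists G, is_filling eta G /\ chain_image G `<=` cnbhd (chain_image eta) rho]].

(* smallest s >= r at which the class of eta dies in H_n(U(P,s)) *)
Definition death_time n (P : seq 'rV[R]_d) (r : R) (eta : chain n) : \bar R :=
  ereal_inf [set s%:E | s in
    [set s : R | r <= s /\ exists G, is_filling eta G /\ chain_image G `<=` Ucov P s]].

End Singular.

From HB Require Import structures.
From mathcomp Require Import all_boot all_order all_algebra.
From mathcomp Require Import all_classical all_reals all_analysis.
From mathcomp Require Import lra ring.
Import Order.TTheory GRing.Theory Num.Theory.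
Import numFieldNormedType.Exports.
Local Open Scope ring_scope.
Local Open Scope classical_set_scope.

(* If the image of eta lies in U(P, r), the triangle inequality puts the
   closed rho-neighbourhood of that image inside U(P, r + rho).  Hence every
   filling of eta within distance rho of eta kills its class at scale r + rho,
   and rho can be taken arbitrarily close to the filling radius. *)

Lemma sumr_sqr_ge0 (R : realDomainType) (n : nat) (a : 'I_n -> R) :
  0 <= \sum_i a i ^+ 2.
Proof. by apply: sumr_ge0 => i _; exact: sqr_ge0. Qed.

Lemma Lagrange_identity (R : comPzRingType) (n : nat) (a b : 'I_n -> R) :
  ((\sum_i a i ^+ 2) * (\sum_i b i ^+ 2) - (\sum_i a i * b i) ^+ 2) *+ 2
    = \sum_i \sum_j (a i * b j - a j * b i) ^+ 2.
Proof.
have AB : (\sum_i a i ^+ 2) * (\sum_i b i ^+ 2) = \sum_i \sum_j a i ^+ 2 * b j ^+ 2.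
  exact: big_distrlr.
have BA : (\sum_i a i ^+ 2) * (\sum_i b i ^+ 2) = \sum_i \sum_j a j ^+ 2 * b i ^+ 2.
  by rewrite mulrC big_distrlr; apply: eq_bigr => i _; apply: eq_bigr => j _; rewrite mulrC.
have SS : (\sum_i a i * b i) ^+ 2 = \sum_i \sum_j (a i * b i) * (a j * b j).
  by rewrite expr2 big_distrlr.
rewrite mulr2n {1}AB BA SS -!sumrB -big_split /=.
apply: eq_bigr => i _; rewrite -!sumrB -big_split /=.
by apply: eq_bigr => j _; ring.
Qed.

Lemma CauchySchwarz_sum (R : realDomainType) (n : nat) (a b : 'I_n -> R) :
  (\sum_i a i * b i) ^+ 2 <= (\sum_i a i ^+ 2) * (\sum_i b i ^+ 2).
Proof.
rewrite -subr_ge0 -(pmulrn_lge0 _ (isT : 0 < 2)%N) Lagrange_identity.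
by apply: sumr_ge0 => i _; apply: sumr_ge0 => j _; exact: sqr_ge0.
Qed.

Lemma CauchySchwarz_sum_sqrt (R : rcfType) (n : nat) (a b : 'I_n -> R) :
  \sum_i a i * b i <= Num.sqrt (\sum_i a i ^+ 2) * Num.sqrt (\sum_i b i ^+ 2).
Proof.
rewrite -sqrtrM ?sumr_sqr_ge0 //.
apply: le_trans (real_ler_norm _) _; first exact: num_real.
by rewrite -sqrtr_sqr ler_wsqrtr // CauchySchwarz_sum.
Qed.

Lemma ler_enormD {R : realType} {d : nat} (x y : 'rV[R]_d) :
  enorm (x + y) <= enorm x + enorm y.
Proof.
have nx := sqrtr_ge0 (\sum_i x ord0 i ^+ 2).
have ny := sqrtr_ge0 (\sum_i y ord0 i ^+ 2).
rewrite /enorm -[X in _ <= X]ger0_norm ?addr_ge0 // -sqrtr_sqr ler_wsqrtr //.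
have -> : \sum_i (x + y) ord0 i ^+ 2 =
    \sum_i x ord0 i ^+ 2 + (\sum_i x ord0 i * y ord0 i) *+ 2 + \sum_i y ord0 i ^+ 2.
  by rewrite -sumrMnl -!big_split; apply: eq_bigr => i _; rewrite /= mxE; ring.
rewrite sqrrD !sqr_sqrtr ?sumr_sqr_ge0 // lerD2r lerD2l lerMn2r /=.
exact: CauchySchwarz_sum_sqrt.
Qed.

Lemma cnbhd_Ucov {R : realType} {d : nat} {P : seq 'rV[R]_d} {X : set 'rV[R]_d}
    {r : R} (rho : R) :
  X `<=` Ucov P r -> cnbhd X rho `<=` Ucov P (r + rho).
Proof.
move=> XP x [y /XP [p Pp yp] xy]; exists p => //; rewrite /cball /=.
rewrite -(subrKA y) (le_trans (ler_enormD _ _)) // addrC.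
exact: lerD.
Qed.

Lemma exists_filling_near_radius {R : realType} {d n : nat} {eta : chain R d n}
    {Rf e : R} :
  filling_radius eta = Rf%:E -> 0 < e ->
  exists rho G, [/\ 0 < rho, rho < Rf + e, is_filling eta G &
                    chain_image G `<=` cnbhd (chain_image eta) rho].
Proof.
move=> FR e0.
have : (filling_radius eta < (Rf + e)%:E)%E by rewrite FR lte_fin ltrDl.
case/ereal_inf_lt => _ [rho [rho0 [G [fillG imG]]] <-]; rewrite lte_fin => rhoR.
by exists rho, G.
Qed.

Lemma death_time_le {R : realType} {d n : nat} {P : seq 'rV[R]_d} {r s : R}
    {eta : chain R d n} {G : chain R d n.+1} :
  r <= s -> is_filling eta G -> chain_image G `<=` Ucov P s ->
  (death_time P r eta <= s%:E)%E.
Proof.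
by move=> rs fillG imG; apply: ereal_inf_lbound; exists s => //; split => //; exists G.
Qed.

Theorem lemma6p6 (R : realType) (d k : nat) (P : seq 'rV[R]_d) (r Rf : R)
  (eta : chain R d k) :
  0 < r -> is_chain eta -> is_cycle eta ->
  chain_image eta `<=` Ucov P r ->
  filling_radius eta = Rf%:E ->
  (death_time P r eta <= (Rf + r)%:E)%E.
Proof.
move=> _ _ _ etaP FR; apply/lee_addgt0Pr => e e0.
have [rho [G [rho0 rhoR fillG imG]]] := exists_filling_near_radius FR e0.
have imGU : chain_image G `<=` Ucov P (r + rho).
  exact: subset_trans imG (cnbhd_Ucov rho etaP).
have r_le : r <= r + rho by rewrite lerDl ltW.
apply: le_trans (death_time_le r_le fillG imGU) _.
by rewrite -EFinD lee_fin; lra.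
Qed.
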